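(* Let $\mathcal{S}$ be finite, $\Pi$ irreducible stochastic on $\mathcal{S}$, $\kappa(x,y):=\pi_{xy}-\mathbf{1}_{x=y}$, $Q=(q(y))$ the invariant distribution, and assume detailed balance $q(y)\kappa(y,z)=q(z)\kappa(z,y)$ for all $y,z$. Let $\Phi:(0,\infty)\to\mathbb{R}$ be convex, continuously differentiable with continuous strictly positive second derivative, $\Phi(1)=0$, $\varphi:=\Phi'$. Fix $\ell:\mathcal{S}\to(0,\infty)$ with $\sum_xq(x)\ell(x)=1$. Then for every $f:\mathcal{S}\to\mathbb{R}$, $$\|f\|_{\mathbb{H}^{-1}_\Theta(\mathcal{S},\ell Q)}=\inf_{G:\mathcal{Z}\to\mathbb{R}}\Big\{\|G\|_{\mathbb{L}^2(\mathcal{Z},\vartheta_\ell C)}\;:\;f+\nabla\cdot(\vartheta_\ell G)=0\Big\}.$$ Moreover $\|f\|_{\mathbb{H}^{-1}_\Theta(\mathcal{S},\ell Q)}<\infty$ if and only if $\sum_xq(x)f(x)=0$; in that case the infimum is attained, and uniquely, by the unique discrete gradient $G=\nabla h$ ($h:\mathcal{S}\to\mathbb{R}$) satisfying the constraint.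
   Context: $\mathcal{Z}:=\{(x,y):\kappa(x,y)>0\}$, $c(x,y):=\frac12\kappa(x,y)q(x)$. Discrete gradient $\nabla f(x,y):=f(y)-f(x)$; discrete divergence of $F$: $(\nabla\cdot F)(x):=\frac12\sum_{y\neq x}\kappa(x,y)[F(x,y)-F(y,x)]$. $\Theta^\Phi(a,b):=\frac{a-b}{\varphi(a)-\varphi(b)}$ for $a\neq b$, $\Theta^\Phi(b,b):=1/\Phi''(b)$; $\vartheta_\ell(x,y):=\Theta^\Phi(\ell(x),\ell(y))$. Weighted norm $\|F\|^2_{\mathbb{L}^2(\mathcal{Z},\vartheta_\ell C)}:=\sum_{(x,y)\in\mathcal{Z}}c(x,y)\vartheta_\ell(x,y)F(x,y)^2$ (with inner product defined analogously). $\|f\|_{\mathbb{H}^1_\Theta(\mathcal{S},\ell Q)}:=\|\nabla f\|_{\mathbb{L}^2(\mathcal{Z},\vartheta_\ell C)}$, and $\|f\|_{\mathbb{H}^{-1}_\Theta(\mathcal{S},\ell Q)}:=\sup_{g:\mathcal{S}\to\mathbb{R}}\frac{\sum_xq(x)f(x)g(x)}{\|g\|_{\mathbb{H}^1_\Theta(\mathcal{S},\ell Q)}}$. *)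

From HB Require Import structures.
From mathcomp Require Import all_boot all_order all_algebra.
From mathcomp Require Import all_classical all_reals all_analysis.
Set Implicit Arguments. Unset Strict Implicit. Unset Printing Implicit Defensive.
Import Order.TTheory GRing.Theory Num.Theory numFieldNormedType.Exports.
Local Open Scope ring_scope.

Section Defs.
Variables (R : realType) (S : finType).

Definition kappa (Pi : S -> S -> R) (x y : S) : R := Pi x y - (x == y)%:R.

Definition stochastic (Pi : S -> S -> R) : Prop :=
  (forall x y, 0 <= Pi x y) /\ (forall x, \sum_(y : S) Pi x y = 1).

Definition irreducible (Pi : S -> S -> R) : Prop :=
  forall x y, connect (fun a b => 0 < Pi a b) x y.

Definition invariant_distribution (Pi : S -> S -> R) (q : S -> R) : Prop :=
  (forall x, 0 <= q x) /\ \sum_(x : S) q x = 1 /\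
  (forall y, \sum_(x : S) q x * Pi x y = q y).

Definition Theta (Phi : R -> R) (a b : R) : R :=
  if a == b then (derive1 (derive1 Phi) b)^-1
  else (a - b) / (derive1 Phi a - derive1 Phi b).

Definition vartheta (Phi : R -> R) (l : S -> R) (x y : S) : R :=
  Theta Phi (l x) (l y).

Definition dgrad (f : S -> R) (x y : S) : R := f y - f x.

(* discrete divergence of F : S -> S -> R (only values on Z matter) *)
Definition ddiv (Pi : S -> S -> R) (F : S -> S -> R) (x : S) : R :=
  2^-1 * \sum_(y : S | y != x) kappa Pi x y * (F x y - F y x).

Definition cw (Pi : S -> S -> R) (q : S -> R) (x y : S) : R :=
  2^-1 * kappa Pi x y * q x.

(* || F ||_{L^2(Z, vartheta_l C)}, sum over Z = {(x,y) : kappa(x,y) > 0} *)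
Definition L2norm (Pi : S -> S -> R) (q : S -> R) (Phi : R -> R) (l : S -> R)
  (F : S -> S -> R) : R :=
  Num.sqrt (\sum_(p : S * S | 0 < kappa Pi p.1 p.2)
              cw Pi q p.1 p.2 * vartheta Phi l p.1 p.2 * F p.1 p.2 ^+ 2).

Definition H1norm Pi q Phi l (g : S -> R) : R := L2norm Pi q Phi l (dgrad g).

Definition ediv (a b : R) : \bar R :=
  if b == 0 then (if a == 0 then 0%E else if 0 < a then +oo%E else -oo%E)
  else (a / b)%:E.

Definition Hm1norm Pi q Phi l (f : S -> R) : \bar R :=
  ereal_sup [set r | exists g : S -> R,
     r = ediv (\sum_(x : S) q x * f x * g x) (H1norm Pi q Phi l g)].

Definition flux_constraint Pi Phi l (f : S -> R) (G : S -> S -> R) : Prop :=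
  forall x, f x + ddiv Pi (fun a b => vartheta Phi l a b * G a b) x = 0.

End Defs.

From HB Require Import structures.
From mathcomp Require Import all_boot all_order all_algebra.
From mathcomp Require Import all_classical all_reals all_analysis.
From mathcomp Require Import ring lra zify.
Set Implicit Arguments. Unset Strict Implicit. Unset Printing Implicit Defensive.
Import Order.TTheory GRing.Theory Num.Theory numFieldNormedType.Exports.
Local Open Scope ring_scope.
Local Open Scope classical_set_scope.

(* Summation by parts (detailed balance) turns the constraint
   f + div (vartheta G) = 0 into  sum_x q f g = <dgrad g, G>  for every g, in the
   inner product weighted by vartheta c on Z.  By Cauchy-Schwarz every admissible
   G bounds the dual norm of f.  If sum_x q f = 0, the weighted Laplacian, whose
   kernel is the constants by irreducibility and whose range has Q-mean zero, is
   onto the mean-zero functions by rank-nullity, so some dgrad h is admissible.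
   Then <dgrad h, G> = |dgrad h|^2 for every admissible G, so
   |G|^2 = |dgrad h|^2 + |G - dgrad h|^2, and g = h attains the supremum.
   If sum_x q f <> 0, nothing is admissible and constant g give the value +oo. *)

Lemma limg_eq_lker (K : fieldType) (V W : vectType K) (F : 'End(V)) (P : 'Hom(V, W)) :
  (limg F <= lker P)%VS -> (\dim (lker F) <= \dim (limg P))%N -> limg F = lker P.
Proof.
move=> FP dimFP; apply/eqP; rewrite eqEdim FP /=.
have := limg_ker_dim F fullv; have := limg_ker_dim P fullv; rewrite !capfv; lia.
Qed.

Section Laplacian.
Variables (K : fieldType) (S : finType) (A : S -> S -> K) (q : S -> K).

Definition laplacian (u : {ffun S -> K^o}) : {ffun S -> K^o} :=
  [ffun x => \sum_y A x y * (u y - u x)].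

Fact laplacian_is_linear : linear laplacian.
Proof.
move=> a u v; apply/ffunP => x; rewrite !ffunE scaler_sumr -big_split /=.
by apply: eq_bigr => y _; rewrite !ffunE /GRing.scale /=; ring.
Qed.

HB.instance Definition _ :=
  GRing.isLinear.Build K {ffun S -> K^o} {ffun S -> K^o} _ laplacian laplacian_is_linear.

Definition qmass (u : {ffun S -> K^o}) : K^o := \sum_x q x * u x.

Fact qmass_is_linear : linear qmass.
Proof.
move=> a u v; rewrite /qmass scaler_sumr -big_split /=.
by apply: eq_bigr => y _; rewrite !ffunE /GRing.scale /=; ring.
Qed.

HB.instance Definition _ :=
  GRing.isLinear.Build K {ffun S -> K^o} K^o _ qmass qmass_is_linear.

Lemma laplacian_solvable :
  (forall h : S -> K, (forall x, \sum_y A x y * (h y - h x) = 0) -> forall x y, h x = h y) ->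
  (forall h : S -> K, \sum_x q x * \sum_y A x y * (h y - h x) = 0) ->
  \sum_x q x != 0 ->
  forall f : S -> K, \sum_x q x * f x = 0 ->
  exists h : S -> K, forall x, \sum_y A x y * (h y - h x) = f x.
Proof.
move=> ker_const img_mass0 mass_neq0 f f_mass0.
pose L := linfun laplacian; pose P := linfun qmass.
pose one : {ffun S -> K^o} := [ffun=> 1].
have dim_kerL : (\dim (lker L) <= 1)%N.
  apply: (@leq_trans (\dim <[one]>)); last by rewrite dim_vline leq_b1.
  apply/dimvS/subvP => v; rewrite memv_ker lfunE /= => /eqP Lv0.
  have v_const : forall x y, v x = v y.
    by apply: ker_const => x; move/ffunP/(_ x): Lv0; rewrite !ffunE.
  have [x0 _|S0] := pickP S; last first.
    by rewrite (_ : v = 0) ?mem0v //; apply/ffunP => y; have := S0 y.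
  rewrite (_ : v = v x0 *: one) ?memvZ ?memv_line //.
  by apply/ffunP => y; rewrite !ffunE /GRing.scale /= mulr1 (v_const y x0).
have dim_imgP : (1 <= \dim (limg P))%N.
  rewrite lt0n dimv_eq0; apply: contra mass_neq0 => /eqP P0.
  have : P one \in limg P by rewrite memv_img ?memvf.
  have qmass_one : qmass one = \sum_x q x by apply: eq_bigr => x _; rewrite ffunE mulr1.
  by rewrite P0 memv0 lfunE /= qmass_one.
have imgL_kerP : (limg L <= lker P)%VS.
  apply/subvP => w /memv_imgP [u _ ->]; rewrite memv_ker !lfunE /= /qmass.
  by apply/eqP; rewrite -[RHS](img_mass0 u); apply: eq_bigr => x _; rewrite ffunE.
have : ([ffun x => f x] : {ffun S -> K^o}) \in lker P.
  rewrite memv_ker lfunE /=; apply/eqP; rewrite -f_mass0.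
  by apply: eq_bigr => x _; rewrite ffunE.
rewrite -(limg_eq_lker imgL_kerP) ?(leq_trans dim_kerL) // => /memv_imgP [u _ Lu].
by exists u => x; move/ffunP/(_ x): Lu; rewrite lfunE /= !ffunE.
Qed.

End Laplacian.

Lemma ThetaC (R : realType) (Phi : R -> R) a b : Theta Phi a b = Theta Phi b a.
Proof.
rewrite /Theta eq_sym; case: eqP => [->|_] //.
by rewrite -mulrNN -invrN !opprB.
Qed.

Section ConvexPhi.
Variables (R : realType) (Phi : R -> R).
Hypothesis Phi'_cont : forall x, 0 < x -> {for x, continuous (derive1 Phi)}.
Hypothesis Phi'_der : forall x, 0 < x -> derivable (derive1 Phi) x 1.
Hypothesis Phi''_gt0 : forall x, 0 < x -> 0 < derive1 (derive1 Phi) x.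

Lemma derive1_ltr x y : 0 < x -> x < y -> derive1 Phi x < derive1 Phi y.
Proof.
move=> x_gt0 xy.
have Phi'_is_derive z : z \in `]x, y[%R ->
    is_derive z 1 (derive1 Phi) (derive1 (derive1 Phi) z).
  rewrite in_itv /= => /andP[xz _]; rewrite derive1E.
  exact/derivableP/Phi'_der/(lt_trans x_gt0).
have Phi'_cont_xy : {within `[x, y], continuous (derive1 Phi)}.
  apply: continuous_in_subspaceT => z; rewrite inE /= in_itv /= => /andP[xz _].
  exact/Phi'_cont/(lt_le_trans x_gt0).
have [c] := MVT xy Phi'_is_derive Phi'_cont_xy.
rewrite in_itv /= => /andP[xc _] Phi'_diff.
by rewrite -subr_gt0 Phi'_diff mulr_gt0 ?subr_gt0 ?Phi''_gt0 ?(lt_trans x_gt0).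
Qed.

Lemma Theta_gt0 a b : 0 < a -> 0 < b -> 0 < Theta Phi a b.
Proof.
wlog ab : a b / a <= b => [hwlog a_gt0 b_gt0|].
  by case: (leP a b) => [/hwlog//|/ltW/hwlog]; rewrite ThetaC; apply.
move=> a_gt0 b_gt0; rewrite /Theta; case: eqP => [_|/eqP a_neq_b].
  by rewrite invr_gt0 Phi''_gt0.
have a_lt_b : a < b by rewrite lt_neqAle a_neq_b.
by rewrite -mulrNN -invrN !opprB divr_gt0 ?subr_gt0 ?derive1_ltr.
Qed.

End ConvexPhi.

Section MarkovChain.
Variables (R : realType) (S : finType) (Pi : S -> S -> R).

Lemma kappa_ge0 : stochastic Pi -> forall x y, x != y -> 0 <= kappa Pi x y.
Proof. by move=> [Pi_ge0 _] x y /negbTE xy; rewrite /kappa xy subr0. Qed.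

Lemma irreducible_dgrad_eq0 (h : S -> R) : irreducible Pi ->
  (forall x y, 0 < kappa Pi x y -> h y = h x) -> forall x y, h x = h y.
Proof.
move=> Pi_irr hZ x y; have /connectP [p pp ->] := Pi_irr x y.
elim: p x pp => [|z p IHp] x //= /andP [xz zp].
rewrite -IHp //; have [->//|x_neq_z] := eqVneq x z.
by apply/esym/hZ; rewrite /kappa (negbTE x_neq_z) subr0.
Qed.

(* An invariant distribution vanishing at one state vanishes at every state
   leading to it, hence everywhere by irreducibility. *)
Lemma invariant_distribution_gt0 (q : S -> R) : stochastic Pi -> irreducible Pi ->
  invariant_distribution Pi q -> forall x, 0 < q x.
Proof.
move=> [Pi_ge0 _] Pi_irr [q_ge0 [q_mass q_inv]] x.
rewrite lt_def q_ge0 andbT; apply: contra_eqN q_mass => /eqP qx0.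
suff q0 z : q z = 0 by rewrite big1 // eq_sym oner_eq0.
have /connectP [p pp z_to_x] := Pi_irr z x; rewrite {}z_to_x in qx0.
elim: p z pp qx0 => [|a p IHp] z //= /andP [za pa] /(IHp a pa) qa0.
move/eqP: (q_inv a); rewrite qa0 psumr_eq0 => [|y _]; last by rewrite mulr_ge0.
move=> /allP /(_ z (mem_index_enum _)) /=.
by rewrite mulf_eq0 (gt_eqF za) orbF => /eqP.
Qed.

End MarkovChain.

Lemma varthetaC (R : realType) (S : finType) (Phi : R -> R) (l : S -> R) x y :
  vartheta Phi l x y = vartheta Phi l y x.
Proof. exact: ThetaC. Qed.

Lemma ddivE (R : realType) (S : finType) (Pi F : S -> S -> R) x :
  ddiv Pi F x = 2^-1 * \sum_y kappa Pi x y * (F x y - F y x).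
Proof. by rewrite /ddiv [in RHS](bigD1 x) //= subrr mulr0 add0r. Qed.

Section FluxDuality.
Variables (R : realType) (S : finType) (Pi : S -> S -> R) (q : S -> R).
Variables (Phi : R -> R) (l : S -> R).
Hypothesis detailed_balance : forall y z, q y * kappa Pi y z = q z * kappa Pi z y.
Hypothesis kappa_offdiag_ge0 : forall x y, x != y -> 0 <= kappa Pi x y.
Hypothesis q_gt0 : forall x, 0 < q x.
Hypothesis vartheta_gt0 : forall x y, 0 < vartheta Phi l x y.
Hypothesis Pi_irr : irreducible Pi.
Hypothesis q_mass : \sum_x q x = 1.

Local Notation th := (vartheta Phi l).

Definition L2dot (F G : S -> S -> R) : R :=
  \sum_(p : S * S | 0 < kappa Pi p.1 p.2)
    cw Pi q p.1 p.2 * th p.1 p.2 * F p.1 p.2 * G p.1 p.2.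

Lemma L2normE F : L2norm Pi q Phi l F = Num.sqrt (L2dot F F).
Proof. by congr Num.sqrt; apply: eq_bigr => p _; rewrite expr2 !mulrA. Qed.

Lemma cw_vartheta_gt0 x y : 0 < kappa Pi x y -> 0 < cw Pi q x y * th x y.
Proof. by move=> k_gt0; rewrite /cw !mulr_gt0 ?invr_gt0 ?ltr0n. Qed.

Lemma L2dotC F G : L2dot F G = L2dot G F.
Proof. by apply: eq_bigr => p _; ring. Qed.

Lemma L2dot_ge0 F : 0 <= L2dot F F.
Proof.
apply: sumr_ge0 => p /cw_vartheta_gt0/ltW w_ge0.
by rewrite -mulrA mulr_ge0 // -expr2 sqr_ge0.
Qed.

Lemma L2dot_eq0 F : L2dot F F = 0 -> forall x y, 0 < kappa Pi x y -> F x y = 0.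
Proof.
move=> /eqP; rewrite psumr_eq0 => [/allP F0 x y k_gt0|p /cw_vartheta_gt0/ltW w_ge0].
  have := F0 (x, y) (mem_index_enum _); rewrite /= k_gt0 /= -mulrA.
  by rewrite mulf_eq0 (gt_eqF (cw_vartheta_gt0 k_gt0)) mulf_eq0 orbb => /eqP.
by rewrite -mulrA mulr_ge0 // -expr2 sqr_ge0.
Qed.

Lemma L2dot_eq0l F G : (forall x y, 0 < kappa Pi x y -> F x y = 0) -> L2dot F G = 0.
Proof. by move=> F0; apply: big1 => p /(F0 p.1 p.2) ->; rewrite mulr0 mul0r. Qed.

Lemma L2dot_comb (u v : R) F G :
  L2dot (fun a b => u * F a b - v * G a b) (fun a b => u * F a b - v * G a b) =
  u ^+ 2 * L2dot F F - 2 * u * v * L2dot F G + v ^+ 2 * L2dot G G.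
Proof. by rewrite /L2dot !mulr_sumr -sumrB -big_split; apply: eq_bigr => p _ /=; ring. Qed.

Lemma L2dot_CauchySchwarz F G :
  L2dot F G <= Num.sqrt (L2dot F F) * Num.sqrt (L2dot G G).
Proof.
have [F0|F_neq0] := eqVneq (L2dot F F) 0.
  by rewrite L2dot_eq0l ?mulr_ge0 ?sqrtr_ge0 //; exact: L2dot_eq0.
have [G0|G_neq0] := eqVneq (L2dot G G) 0.
  by rewrite L2dotC L2dot_eq0l ?mulr_ge0 ?sqrtr_ge0 //; exact: L2dot_eq0.
set s := Num.sqrt (L2dot F F); set t := Num.sqrt (L2dot G G).
have s_gt0 : 0 < s by rewrite sqrtr_gt0 lt_def F_neq0 L2dot_ge0.
have t_gt0 : 0 < t by rewrite sqrtr_gt0 lt_def G_neq0 L2dot_ge0.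
have := L2dot_ge0 (fun a b => t * F a b - s * G a b).
rewrite L2dot_comb -[L2dot F F]sqr_sqrtr ?L2dot_ge0 //.
rewrite -[L2dot G G]sqr_sqrtr ?L2dot_ge0 // -/s -/t.
move=> comb_ge0; have : 0 <= 2 * s * t * (s * t - L2dot F G) by lra.
by rewrite pmulr_rge0 ?mulr_gt0 // subr_ge0.
Qed.

Lemma L2dot_proj_le F G : L2dot F G = L2dot F F -> L2dot F F <= L2dot G G.
Proof.
move=> FG; have := L2dot_ge0 (fun a b => 1 * G a b - 1 * F a b).
by rewrite L2dot_comb L2dotC FG; lra.
Qed.

Lemma L2dot_proj_eq F G : L2dot F G = L2dot F F -> L2dot G G = L2dot F F ->
  forall x y, 0 < kappa Pi x y -> G x y = F x y.
Proof.
move=> FG GG x y k_gt0.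
have D0 : L2dot (fun a b => 1 * G a b - 1 * F a b) (fun a b => 1 * G a b - 1 * F a b) = 0.
  by rewrite L2dot_comb L2dotC FG GG; ring.
by move: (L2dot_eq0 D0 k_gt0); rewrite !mul1r => /subr0_eq.
Qed.

Lemma sum_cw_L2dot H G : (forall x, H x x = 0) ->
  \sum_x \sum_y cw Pi q x y * th x y * H x y * G x y = L2dot H G.
Proof.
move=> H0; rewrite pair_big /L2dot [RHS]big_mkcond; apply: eq_bigr => [[x y]] _ /=.
case: ifP => // /negbT k_le0.
have [->|xy] := eqVneq x y; first by rewrite H0 mulr0 mul0r.
suff k0 : kappa Pi x y = 0 by rewrite /cw k0 mulr0 !mul0r.
by apply/eqP; rewrite eq_le kappa_offdiag_ge0 // andbT leNgt.
Qed.

(* Summation by parts: detailed balance makes [- ddiv] adjoint to [dgrad]. *)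
Lemma sum_ddiv (g : S -> R) G :
  \sum_x q x * g x * ddiv Pi (fun a b => th a b * G a b) x = - L2dot (dgrad g) G.
Proof.
rewrite -sum_cw_L2dot => [|x]; last by rewrite /dgrad subrr.
have swap : \sum_x \sum_y q x * kappa Pi x y * th y x * g x * G y x
          = \sum_x \sum_y q x * kappa Pi x y * th x y * g y * G x y.
  rewrite exchange_big; apply: eq_bigr => x _.
  by apply: eq_bigr => y _; rewrite detailed_balance.
transitivity (2^-1 * (\sum_x \sum_y q x * kappa Pi x y * th x y * g x * G x y
                    - \sum_x \sum_y q x * kappa Pi x y * th y x * g x * G y x)).
  rewrite -sumrB mulr_sumr; apply: eq_bigr => x _; rewrite ddivE -sumrB !mulr_sumr.
  by apply: eq_bigr => y _; ring.
rewrite swap -sumrB mulr_sumr -sumrN; apply: eq_bigr => x _.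
by rewrite -sumrB mulr_sumr -sumrN; apply: eq_bigr => y _; rewrite /cw /dgrad; ring.
Qed.

Lemma ddiv_dgrad h x :
  ddiv Pi (fun a b => th a b * dgrad h a b) x = \sum_y kappa Pi x y * th x y * (h y - h x).
Proof.
rewrite ddivE mulr_sumr; apply: eq_bigr => y _; rewrite /dgrad (varthetaC _ _ y).
have -> : 2^-1 = 1 / 2 :> R by rewrite div1r.
by field.
Qed.

Lemma flux_constraint_dot f G g : flux_constraint Pi Phi l f G ->
  \sum_x q x * f x * g x = L2dot (dgrad g) G.
Proof.
move=> fG; rewrite -[RHS]opprK -sum_ddiv -sumrN; apply: eq_bigr => x _.
have -> : f x = - ddiv Pi (fun a b => th a b * G a b) x by apply/eqP; rewrite -addr_eq0 fG.
ring.
Qed.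

Lemma flux_constraint_mass0 f G : flux_constraint Pi Phi l f G -> \sum_x q x * f x = 0.
Proof.
move=> fG; have := flux_constraint_dot (fun=> 1) fG.
rewrite L2dot_eq0l => [|x y _]; last by rewrite /dgrad subrr.
by under eq_bigr do rewrite mulr1.
Qed.

Lemma flux_constraint_potential f : \sum_x q x * f x = 0 ->
  exists h, flux_constraint Pi Phi l f (dgrad h).
Proof.
move=> f_mass0.
have [||||h Lh] := laplacian_solvable (A := fun x y => kappa Pi x y * th x y)
                                      (q := q) _ _ _ (f := fun x => - f x).
- move=> h Lh0; apply: irreducible_dgrad_eq0 Pi_irr _ => x y k_gt0.
  have Dh0 : L2dot (dgrad h) (dgrad h) = 0.
    apply/eqP; rewrite -oppr_eq0 -sum_ddiv.
    by apply/eqP/big1 => z _; rewrite ddiv_dgrad Lh0 mulr0.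
  exact/subr0_eq/(L2dot_eq0 Dh0 k_gt0).
- move=> h; have := sum_ddiv (fun=> 1) (dgrad h).
  rewrite L2dot_eq0l ?oppr0 => [sum0|x y _]; last by rewrite /dgrad subrr.
  by rewrite -[RHS]sum0; apply: eq_bigr => x _; rewrite mulr1 ddiv_dgrad.
- by rewrite q_mass oner_neq0.
- by under eq_bigr do rewrite mulrN; rewrite sumrN f_mass0 oppr0.
by exists h => x; rewrite ddiv_dgrad Lh subrr.
Qed.

Lemma Hm1norm_pinfty f : \sum_x q x * f x != 0 -> Hm1norm Pi q Phi l f = +oo%E.
Proof.
set s := \sum_x q x * f x => s_neq0; apply/eqP; rewrite -leye_eq.
apply: ereal_sup_ubound; exists (fun=> s).
rewrite /H1norm L2normE L2dot_eq0l ?sqrtr0 => [|x y _]; last by rewrite /dgrad subrr.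
have s2_gt0 : 0 < s * s by rewrite lt_def mulf_neq0 // -expr2 sqr_ge0.
by rewrite /ediv eqxx -mulr_suml (gt_eqF s2_gt0) s2_gt0.
Qed.

Lemma Hm1norm_potential f h : flux_constraint Pi Phi l f (dgrad h) ->
  Hm1norm Pi q Phi l f = (L2norm Pi q Phi l (dgrad h))%:E.
Proof.
move=> fh; rewrite L2normE; set N := Num.sqrt _.
have N2 : L2dot (dgrad h) (dgrad h) = N ^+ 2 by rewrite sqr_sqrtr ?L2dot_ge0.
apply/le_anti/andP; split.
  apply: ge_ereal_sup => _ [g ->]; rewrite /H1norm L2normE (flux_constraint_dot _ fh) /ediv.
  have [Ng0|Ng_neq0] := eqVneq (Num.sqrt (L2dot (dgrad g) (dgrad g))) 0.
    have g0 : L2dot (dgrad g) (dgrad g) = 0.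
      by move/eqP: Ng0; rewrite sqrtr_eq0 => g_le0; apply/le_anti; rewrite g_le0 L2dot_ge0.
    by rewrite (L2dot_eq0l _ (L2dot_eq0 g0)) eqxx lee_fin sqrtr_ge0.
  rewrite lee_fin ler_pdivrMr ?lt_def ?Ng_neq0 ?sqrtr_ge0 // mulrC.
  exact: L2dot_CauchySchwarz.
apply: ereal_sup_ubound; exists h.
rewrite /H1norm L2normE (flux_constraint_dot _ fh) -/N N2 /ediv.
have [->|N_neq0] := eqVneq N 0; first by rewrite expr0n /= !eqxx.
by rewrite expr2 mulfK.
Qed.

Lemma flux_constraint_L2dot f h G : flux_constraint Pi Phi l f (dgrad h) ->
  flux_constraint Pi Phi l f G -> L2dot (dgrad h) G = L2dot (dgrad h) (dgrad h).
Proof. by move=> fh fG; rewrite -(flux_constraint_dot _ fG) (flux_constraint_dot _ fh). Qed.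

Lemma flux_inf f h : flux_constraint Pi Phi l f (dgrad h) ->
  ereal_inf [set (L2norm Pi q Phi l G)%:E | G in [set G | flux_constraint Pi Phi l f G]]
  = (L2norm Pi q Phi l (dgrad h))%:E.
Proof.
move=> fh; apply/le_anti/andP; split; first by apply: ereal_inf_lbound; exists (dgrad h).
apply: le_ereal_inf_tmp => _ [G fG <-]; rewrite lee_fin !L2normE ler_sqrt ?L2dot_ge0 //.
exact/L2dot_proj_le/(flux_constraint_L2dot fh fG).
Qed.

Lemma flux_L2norm_eq f h G : flux_constraint Pi Phi l f (dgrad h) ->
  flux_constraint Pi Phi l f G -> L2norm Pi q Phi l G = L2norm Pi q Phi l (dgrad h) ->
  forall x y, 0 < kappa Pi x y -> G x y = dgrad h x y.
Proof.
move=> fh fG; rewrite !L2normE => /(congr1 (fun r => r ^+ 2)).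
rewrite !sqr_sqrtr ?L2dot_ge0 //; apply: L2dot_proj_eq.
exact: flux_constraint_L2dot fh fG.
Qed.

End FluxDuality.

Theorem proposition8p3 (R : realType) (S : finType)
  (Pi : S -> S -> R) (q : S -> R) (Phi : R -> R) (l : S -> R)
  (hstoch : stochastic Pi) (hirr : irreducible Pi)
  (hq : invariant_distribution Pi q)
  (hdb : forall y z, q y * kappa Pi y z = q z * kappa Pi z y)
  (hPhi_conv : forall x y t : R, 0 < x -> 0 < y -> 0 <= t <= 1 ->
      Phi (t * x + (1 - t) * y) <= t * Phi x + (1 - t) * Phi y)
  (hPhi_d1 : forall x : R, 0 < x -> derivable Phi x 1)
  (hPhi_c1 : forall x : R, 0 < x -> {for x, continuous (derive1 Phi)})
  (hPhi_d2 : forall x : R, 0 < x -> derivable (derive1 Phi) x 1)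
  (hPhi_c2 : forall x : R, 0 < x -> {for x, continuous (derive1 (derive1 Phi))})
  (hPhi_pos : forall x : R, 0 < x -> 0 < (derive1 (derive1 Phi)) x)
  (hPhi1 : Phi 1 = 0)
  (hl : forall x, 0 < l x) (hl1 : \sum_(x : S) q x * l x = 1)
  (f : S -> R) :
  Hm1norm Pi q Phi l f =
    ereal_inf [set ((L2norm Pi q Phi l G)%:E) | G in
                 [set G : S -> S -> R | flux_constraint Pi Phi l f G]]
  /\ ((Hm1norm Pi q Phi l f < +oo)%E <-> \sum_(x : S) q x * f x = 0)
  /\ (\sum_(x : S) q x * f x = 0 ->
      exists h : S -> R,
        flux_constraint Pi Phi l f (dgrad h)
        /\ (L2norm Pi q Phi l (dgrad h))%:E = Hm1norm Pi q Phi l f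
        /\ (forall h' : S -> R, flux_constraint Pi Phi l f (dgrad h') ->
              forall x y, 0 < kappa Pi x y -> dgrad h' x y = dgrad h x y)
        /\ (forall G : S -> S -> R, flux_constraint Pi Phi l f G ->
              (L2norm Pi q Phi l G)%:E = Hm1norm Pi q Phi l f ->
              forall x y, 0 < kappa Pi x y -> G x y = dgrad h x y)).
Proof.
have k_ge0 := kappa_ge0 hstoch.
have q_gt0 := invariant_distribution_gt0 hstoch hirr hq.
have th_gt0 x y : 0 < vartheta Phi l x y :=
  Theta_gt0 hPhi_c1 hPhi_d2 hPhi_pos (hl x) (hl y).
have [f_mass0|/eqP f_mass_neq0] := eqVneq (\sum_x q x * f x) 0; last first.
  have no_flux : [set G | flux_constraint Pi Phi l f G] = set0.
    by apply/seteqP; split=> // G /(flux_constraint_mass0 hdb k_ge0).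
  rewrite Hm1norm_pinfty; last exact/eqP.
  rewrite no_flux image_set0 ereal_inf0 ltxx.
  by split=> //; split=> [|/f_mass_neq0 //]; split=> // /f_mass_neq0.
have [h fh] := flux_constraint_potential hdb k_ge0 q_gt0 th_gt0 hirr hq.2.1 f_mass0.
have Hm1_pot g (fg : flux_constraint Pi Phi l f (dgrad g)) :=
  Hm1norm_potential hdb k_ge0 q_gt0 th_gt0 fg.
have L2_eq := flux_L2norm_eq hdb k_ge0 q_gt0 th_gt0 fh.
rewrite (Hm1_pot h fh) (flux_inf hdb k_ge0 q_gt0 th_gt0 fh) ltry.
split=> //; split=> // _; exists h; do !split=> //.
- move=> h' fh'; apply: (L2_eq _ fh'); apply: EFin_inj.
  by rewrite -(Hm1_pot h' fh') -(Hm1_pot h fh).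
- by move=> G fG [GN]; exact: L2_eq.
Qed.
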